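(* Let $\mathcal{D}$ be a $\{K_3,K_4\}$-decomposition of $K_{18}$ with $\alpha=13$, let $W$ be the set of vertices $x$ with $\alpha_x\ge 2$, and for $i\in\{0,1,2,3\}$ let $t_i$ be the number of copies of $K_3$ in $\mathcal{D}$ having exactly $i$ vertices in $W$. Then $(t_0,t_1,t_2,t_3)\neq(0,3,5,5)$.
   Context: A $\{K_3,K_4\}$-decomposition of $K_v$ is a collection of subgraphs, each isomorphic to $K_3$ or $K_4$, such that every edge of $K_v$ lies in exactly one of them. $\alpha$ is the number of copies of $K_3$ in the decomposition, and for a vertex $x$, $\alpha_x$ is the number of copies of $K_3$ in the decomposition containing $x$. *)

From mathcomp Require Import all_boot.
Set Implicit Arguments. Unset Strict Implicit. Unset Printing Implicit Defensive.

(* A {K3,K4}-decomposition of K_v: vertex set 'I_v; each copy of K3/K4 is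
   represented by its vertex set (a block of size 3 or 4); the list of blocks
   must cover each edge {x,y} (x <> y) of K_v exactly once. *)
Definition K34_decomposition (v : nat) (D : seq {set 'I_v}) : Prop :=
  (forall B, B \in D -> (#|B| == 3) || (#|B| == 4)) /\
  (forall x y : 'I_v, x != y -> count (fun B : {set 'I_v} => (x \in B) && (y \in B)) D = 1).

Definition alpha (v : nat) (D : seq {set 'I_v}) : nat :=
  count (fun B : {set 'I_v} => #|B| == 3) D.

Definition alpha_at (v : nat) (D : seq {set 'I_v}) (x : 'I_v) : nat :=
  count (fun B : {set 'I_v} => (#|B| == 3) && (x \in B)) D.

Definition Wset (v : nat) (D : seq {set 'I_v}) : {set 'I_v} :=
  [set x | 2 <= alpha_at D x].

Definition t_count (v : nat) (D : seq {set 'I_v}) (i : nat) : nat :=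
  count (fun B : {set 'I_v} => (#|B| == 3) && (#|B :&: Wset D| == i)) D.

From mathcomp Require Import all_boot.
From mathcomp Require Import zify.

Set Implicit Arguments.
Unset Strict Implicit.

(* Counting the edges of K_18 gives 19 copies of K4, and counting the edges at
   a vertex x gives 2 alpha_x + 3 beta_x = 17, where beta_x counts the copies
   of K4 at x; as 3 does not divide 17, alpha_x >= 1, so alpha_x = 1 off W.
   With the given t_i the triangles meet W in 28 incidences, and
   3 alpha = 39 = 28 + (18 - |W|) forces |W| = 7.  Summing the vertex equation
   over W shows that the copies of K4 meet W in 21 incidences, while counting
   the 42 ordered pairs of vertices of W leaves only 2 of them to the copies
   of K4.  But k (k - 1) >= 2 k - 2, so 19 blocks with sum of |B :&: W| equal
   to 21 carry at least 2 * 21 - 2 * 19 = 4 ordered pairs inside W. *)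

Section DoubleCounting.

Variables (T : finType) (D : seq {set T}).

Lemma sum_mem_setI (S B : {set T}) : \sum_(x in S) (x \in B) = #|B :&: S|.
Proof.
rewrite -sum1_card big_mkcond [RHS]big_mkcond /=.
by apply: eq_bigr => x _; rewrite inE; case: (x \in B); case: (x \in S).
Qed.

Lemma sum_count_mem (P : pred {set T}) (S : {set T}) :
  \sum_(x in S) count (fun B : {set T} => P B && (x \in B)) D
  = \sum_(B <- D | P B) #|B :&: S|.
Proof.
elim: D => [|B D' IH]; first by rewrite big_nil big1.
rewrite big_cons /= big_split IH /=.
by case: (P B) => /=; [rewrite sum_mem_setI | rewrite big1].
Qed.

Lemma sum_mem_count (P : pred {set T}) (x : T) :
  \sum_(B <- D | P B) (x \in B) = count (fun B => P B && (x \in B)) D.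
Proof.
by elim: D => [|B D' IH]; rewrite ?big_nil ?big_cons //= IH; case: (P B).
Qed.

Lemma sum_count_pairs_at (S : {set T}) (x : T) : x \in S ->
  \sum_(y in S | y != x) count (fun B : {set T} => (x \in B) && (y \in B)) D
  = \sum_(B <- D) (x \in B) * #|B :&: S|.-1.
Proof.
move=> xS; elim: D => [|B D' IH]; first by rewrite big_nil big1.
rewrite big_cons /= big_split IH /=; congr (_ + _).
case xB: (x \in B) => /=; last by rewrite big1.
by rewrite mul1n -sum_mem_setI [in RHS](bigD1 x) //= xB.
Qed.

Lemma sum_count_pairs (S : {set T}) :
  \sum_(x in S) \sum_(y in S | y != x) count (fun B : {set T} => (x \in B) && (y \in B)) D
  = \sum_(B <- D) #|B :&: S| * #|B :&: S|.-1.
Proof.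
rewrite (eq_bigr _ (@sum_count_pairs_at S)).
rewrite exchange_big /=; apply: eq_bigr => B _.
by rewrite -big_distrl /= sum_mem_setI.
Qed.

Hypothesis pair_once :
  forall x y : T, x != y -> count (fun B : {set T} => (x \in B) && (y \in B)) D = 1.

Lemma sum_count_pairs_once (S : {set T}) (x : T) : x \in S ->
  \sum_(y in S | y != x) count (fun B : {set T} => (x \in B) && (y \in B)) D = #|S|.-1.
Proof.
move=> xS; rewrite (eq_bigr (fun _ => 1)); last first.
  by move=> y /andP[_ yx]; apply: pair_once; rewrite eq_sym.
rewrite sum1_card (cardsD1 x S) xS add1n /=.
by apply: eq_card => y; rewrite !inE andbC.
Qed.

Lemma pairs_in_blocks (S : {set T}) :
  \sum_(B <- D) #|B :&: S| * #|B :&: S|.-1 = #|S| * #|S|.-1.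
Proof.
rewrite -sum_count_pairs -sum_nat_const.
by apply: eq_bigr => x xS; rewrite sum_count_pairs_once.
Qed.

End DoubleCounting.

Definition k4_at (v : nat) (D : seq {set 'I_v}) (x : 'I_v) : nat :=
  count (fun B : {set 'I_v} => (#|B| == 4) && (x \in B)) D.

Section Triangles.

Variables (v : nat) (D : seq {set 'I_v}).

Lemma sum_triangles_by_t_count (f : nat -> nat) :
  \sum_(B <- D | #|B| == 3) f #|B :&: Wset D|
  = f 0 * t_count D 0 + f 1 * t_count D 1 + f 2 * t_count D 2 + f 3 * t_count D 3.
Proof.
rewrite /t_count; move: (Wset D) => W.
elim: D => [|B D' IH]; first by rewrite big_nil /=; lia.
rewrite big_cons /= IH; case B3: (#|B| == 3) => /=; last by lia.
have : #|B :&: W| <= 3 by rewrite -(eqP B3) subset_leq_card ?subsetIl.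
by case: #|B :&: W| => [|[|[|[|k]]]] //= _; lia.
Qed.

Lemma sum_alpha_at_Wset :
  \sum_(x in Wset D) alpha_at D x = t_count D 1 + 2 * t_count D 2 + 3 * t_count D 3.
Proof.
rewrite /alpha_at (sum_count_mem D (fun B => #|B| == 3)).
by rewrite (sum_triangles_by_t_count id) /=; lia.
Qed.

Lemma sum_alpha_at : \sum_(x in [set: 'I_v]) alpha_at D x = 3 * alpha D.
Proof.
rewrite /alpha_at (sum_count_mem D (fun B => #|B| == 3)).
rewrite (eq_bigr (fun _ => 3)) => [|B /eqP B3]; last by rewrite setIT B3.
by rewrite big_const_seq iter_addn_0.
Qed.

End Triangles.

Section Decomposition.

Variables (v : nat) (D : seq {set 'I_v}).
Hypothesis decD : K34_decomposition D.

Lemma sum_blocks_by_size (F : {set 'I_v} -> nat) :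
  \sum_(B <- D) F B
  = \sum_(B <- D | #|B| == 3) F B + \sum_(B <- D | #|B| == 4) F B.
Proof.
case: decD => + _; elim: D => [|B D' IH] sizeD; first by rewrite !big_nil.
rewrite !big_cons IH => [|C DC]; last by apply: sizeD; rewrite inE DC orbT.
by case/orP: (sizeD B (mem_head _ _)) => /eqP -> /=; lia.
Qed.

Lemma block_count :
  6 * alpha D + 12 * count (fun B : {set 'I_v} => #|B| == 4) D = v * v.-1.
Proof.
have := pairs_in_blocks decD.2 setT.
rewrite sum_blocks_by_size cardsT card_ord => <-.
rewrite (eq_bigr (fun _ => 6)) => [|B /eqP B3]; last by rewrite setIT B3 mulnC.
rewrite [X in _ = _ + X](eq_bigr (fun _ => 12)) => [|B /eqP B4];
  last by rewrite setIT B4.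
by rewrite !big_const_seq !iter_addn_0 /alpha; lia.
Qed.

Lemma vertex_degree (x : 'I_v) : 2 * alpha_at D x + 3 * k4_at D x = v.-1.
Proof.
rewrite -[v in RHS]card_ord -cardsT -(sum_count_pairs_once decD.2 (in_setT x)).
rewrite sum_count_pairs_at ?inE // sum_blocks_by_size.
rewrite (eq_bigr (fun B : {set 'I_v} => 2 * (x \in B))) => [|B /eqP B3]; last first.
  by rewrite setIT B3 mulnC.
rewrite [X in _ = _ + X](eq_bigr (fun B : {set 'I_v} => 3 * (x \in B))) => [|B /eqP B4];
  last by rewrite setIT B4 mulnC.
by rewrite -!big_distrr /= !sum_mem_count.
Qed.

Lemma alpha_at_gt0 (x : 'I_v) : ~~ (3 %| v.-1) -> 0 < alpha_at D x.
Proof.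
rewrite -(vertex_degree x) lt0n; apply: contra => /eqP ->.
by rewrite muln0 add0n dvdn_mulr.
Qed.

Lemma alpha_by_Wset : ~~ (3 %| v.-1) ->
  3 * alpha D = \sum_(x in Wset D) alpha_at D x + #|~: Wset D|.
Proof.
move=> v1; rewrite -sum_alpha_at (big_setID (Wset D)) setTI setTD -sum1_card.
congr (_ + _); apply: eq_bigr => x; rewrite !inE -ltnNge ltnS => le1.
by apply/eqP; rewrite eqn_leq le1 alpha_at_gt0.
Qed.

Lemma sum_k4_meet (S : {set 'I_v}) :
  2 * \sum_(x in S) alpha_at D x + 3 * \sum_(B <- D | #|B| == 4) #|B :&: S|
  = #|S| * v.-1.
Proof.
rewrite -(sum_count_mem D (fun B => #|B| == 4)) -sum_nat_const.
rewrite !big_distrr -big_split /=; apply: eq_bigr => x _.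
exact: vertex_degree.
Qed.

End Decomposition.

Theorem mainTheorem13 (D : seq {set 'I_18}) :
  K34_decomposition D -> alpha D = 13 ->
  (t_count D 0, t_count D 1, t_count D 2, t_count D 3) <> (0, 3, 5, 5).
Proof.
move=> decD alpha13 [t0 t1 t2 t3].
have k4_19 : count (fun B : {set 'I_18} => #|B| == 4) D = 19.
  by have := block_count decD; rewrite alpha13; lia.
have sumW : \sum_(x in Wset D) alpha_at D x = 28.
  by rewrite sum_alpha_at_Wset t1 t2 t3.
have W7 : #|Wset D| = 7.
  by have := alpha_by_Wset decD isT; rewrite alpha13 sumW cardsCs setCK card_ord; lia.
have meet21 : \sum_(B <- D | #|B| == 4) #|B :&: Wset D| = 21.
  by have := sum_k4_meet decD (Wset D); rewrite sumW W7; lia.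
have pairs2 : \sum_(B <- D | #|B| == 4) #|B :&: Wset D| * #|B :&: Wset D|.-1 = 2.
  have := pairs_in_blocks decD.2 (Wset D).
  rewrite (sum_blocks_by_size decD) (sum_triangles_by_t_count D (fun k => k * k.-1)).
  by rewrite t0 t1 t2 t3 W7 /= => h; apply/eqP; rewrite -(eqn_add2l 40) h.
have : 2 * \sum_(B <- D | #|B| == 4) #|B :&: Wset D|
       <= \sum_(B <- D | #|B| == 4) #|B :&: Wset D| * #|B :&: Wset D|.-1
          + 2 * count (fun B : {set 'I_18} => #|B| == 4) D.
  rewrite big_distrr -iter_addn_0 -big_const_seq -big_split /=.
  by apply: leq_sum => B _; nia.
by rewrite meet21 pairs2 k4_19.
Qed.
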